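(* If $(\Phi,\{J_{P(z)}\}_{z\in\mathbb C^\times},\varphi)$ is a (lax) vertex tensor functor between vertex tensor categories $\mathcal C_1$ and $\mathcal C_2$, then $(\Phi,J=J_{P(1)},\varphi)$ is a (lax) braided tensor functor with respect to the induced braided tensor category structures on $\mathcal C_1$ and $\mathcal C_2$.
   Context: A vertex tensor category (in the sense used here, following Huang–Lepowsky–Zhang, not necessarily consisting of modules) is a category with bifunctors $\boxtimes_{P(z)}$ for $z\in\mathbb C^\times$, a unit object, natural isomorphisms: parallel transport $T_\gamma:\boxtimes_{P(z_1)}\to\boxtimes_{P(z_2)}$ for each continuous path $\gamma$ in $\mathbb C^\times$ from $z_1$ to $z_2$ (written $T_{z_1\to z_2}$ when $\gamma$ does not cross the positive real axis), $P(z)$-unit isomorphisms $l_{P(z)},r_{P(z)}$, $P(z_1,z_2)$-associativity isomorphisms $\mathcal A_{P(z_1,z_2);W_1,W_2,W_3}:W_1\boxtimes_{P(z_1)}(W_2\boxtimes_{P(z_2)}W_3)\to(W_1\boxtimes_{P(z_1-z_2)}W_2)\boxtimes_{P(z_2)}W_3$ for $|z_1|>|z_2|>|z_1-z_2|>0$, and $P(z)$-braiding isomorphisms $\mathcal R_{P(z);W_1,W_2}:W_1\boxtimes_{P(z)}W_2\to W_2\boxtimes_{P(-z)}W_1$, satisfying coherence conditions. The induced braided tensor category has $\boxtimes=\boxtimes_{P(1)}$, $l=l_{P(1)}$, $r=r_{P(1)}$, associativity $\mathcal A=T_{r_2\to1}\circ(T_{r_1-r_2\to1}\boxtimes_{P(r_2)}1)\circ\mathcal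 A_{P(r_1,r_2)}\circ(1\boxtimes_{P(r_1)}T_{1\to r_2})\circ T_{1\to r_1}$ for reals $r_1>r_2>r_1-r_2>0$ (independent of the choice), and braiding $\mathcal R=T_{-1\to1}\circ\mathcal R_{P(1)}$. A (lax) vertex tensor functor is $(\Phi,\{J_{P(z)}\},\varphi)$ with $\Phi:\mathcal C_1\to\mathcal C_2$ a functor, $J_{P(z)}:\boxtimes_{P(z)}\circ(\Phi\times\Phi)\to\Phi\circ\boxtimes_{P(z)}$ natural isomorphisms (natural transformations in the lax case), $\varphi:V_2\to\Phi(V_1)$ an isomorphism between the unit objects, such that: $J_{P(z_2)}\circ T_\gamma=\Phi(T_\gamma)\circ J_{P(z_1)}$ for all paths $\gamma$ from $z_1$ to $z_2$; $\Phi(l_{P(z)})\circ J_{P(z);V_1,M}\circ(\varphi\boxtimes_{P(z)}1)=l_{P(z);\Phi(M)}$ and $\Phi(r_{P(z)})\circ J_{P(z);M,V_1}\circ(1\boxtimes_{P(z)}\varphi)=r_{P(z);\Phi(M)}$; $J_{P(z_2)}\circ(J_{P(z_1-z_2)}\boxtimes_{P(z_2)}1)\circ\mathcal A_{P(z_1,z_2)}=\Phi(\mathcal A_{P(z_1,z_2)})\circ J_{P(z_1)}\circ(1\boxtimes_{P(z_1)}J_{P(z_2)})$ for $|z_1|>|z_2|>|z_1-z_2|>0$; and $J_{P(-z);M_2,M_1}\circ\mathcal R_{P(z)}=\Phi(\mathcal R_{P(z)})\circ J_{P(z);M_1,M_2}$. A (lax) braided tensor functor is a functor with (not necessarily invertible,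 in the lax case) natural $J:\Phi(\cdot)\boxtimes\Phi(\cdot)\to\Phi(\cdot\boxtimes\cdot)$ and unit isomorphism $\varphi$ compatible with the unit, associativity and braiding isomorphisms. *)

From Stdlib Require Import Reals.
From Coquelicot Require Import Coquelicot.
Open Scope R_scope.

Notation CC := Complex.C.

Record Cat := {
  Ob :> Type;
  Hom : Ob -> Ob -> Type;
  idm : forall A, Hom A A;
  comp : forall A B D, Hom B D -> Hom A B -> Hom A D;
  comp_idl : forall A B (f : Hom A B), comp A B B (idm B) f = f;
  comp_idr : forall A B (f : Hom A B), comp A A B f (idm A) = f;
  comp_assoc : forall A B D E (h : Hom D E) (g : Hom B D) (f : Hom A B),
      comp A D E h (comp A B D g f) = comp A B E (comp B D E h g) f }.

Arguments Hom {c} _ _.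
Arguments idm {c} A.
Arguments comp {c A B D} _ _.
Notation "g ∘ f" := (comp g f) (at level 40, left associativity).

Definition is_iso {K : Cat} {A B : K} (f : Hom A B) : Prop :=
  exists g : Hom B A, g ∘ f = idm A /\ f ∘ g = idm B.

Record Functor (K L : Cat) := {
  fob :> K -> L;
  fmap : forall A B : K, Hom A B -> Hom (fob A) (fob B);
  fmap_id : forall A, fmap A A (idm A) = idm (fob A);
  fmap_comp : forall A B D (g : Hom B D) (f : Hom A B),
      fmap A D (g ∘ f) = fmap B D g ∘ fmap A B f }.
Arguments fmap {K L} _ {A B} _.

Definition in01 (t : R) : Prop := 0 <= t <= 1.

Definition cont01C (f : R -> CC) : Prop :=
  forall t, in01 t -> filterlim f (within in01 (locally t)) (locally (f t)).
Definition cont01R (f : R -> R) : Prop :=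
  forall t, in01 t -> filterlim f (within in01 (locally t)) (locally (f t)).

Record cpath (z1 z2 : CC) := {
  pfun :> R -> CC;
  pstart : pfun 0 = z1;
  pend : pfun 1 = z2;
  pcont : cont01C pfun;
  pnonzero : forall t, in01 t -> pfun t <> RtoC 0 }.

Definition in_sq (p : R * R) : Prop := in01 (fst p) /\ in01 (snd p).
Definition homotopic {z1 z2} (g h : cpath z1 z2) : Prop :=
  exists H : R * R -> CC,
    (forall p, in_sq p -> filterlim H (within in_sq (locally p)) (locally (H p))) /\
    (forall t, in01 t -> H (0, t) = g t /\ H (1, t) = h t) /\
    (forall s, in01 s -> H (s, 0) = z1 /\ H (s, 1) = z2) /\
    (forall s t, in01 s -> in01 t -> H (s, t) <> RtoC 0).

Definition is_concat {z1 z2 z3} (g1 : cpath z1 z2) (g2 : cpath z2 z3)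
  (g : cpath z1 z3) : Prop :=
  (forall t, 0 <= t <= /2 -> g t = g1 (2 * t)) /\
  (forall t, /2 <= t <= 1 -> g t = g2 (2 * t - 1)).

Definition is_constant_path {z} (g : cpath z z) : Prop :=
  forall t, in01 t -> g t = z.

(* "the path does not cross the positive real axis": it admits a continuous
   argument with values in [0, 2 pi) (the branch convention log z = log|z| + i arg z,
   0 <= arg z < 2 pi).  The parallel transports T_{z1 -> z2} of the paper are the
   T_gamma for such paths. *)
Definition no_cross {z1 z2} (g : cpath z1 z2) : Prop :=
  exists theta : R -> R, cont01R theta /\
    forall t, in01 t -> 0 <= theta t < 2 * PI /\
      g t = (Cmod (g t) * cos (theta t), Cmod (g t) * sin (theta t)).

Definition assoc_region (z1 z2 : CC) : Prop :=
  Cmod z1 > Cmod z2 /\ Cmod z2 > Cmod (Cminus z1 z2) /\ Cmod (Cminus z1 z2) > 0.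

(* Vertex tensor categories.  Data indexed by all z : C; all axioms are only
   imposed for z in C^x (resp. in the associativity region); values at z = 0 are
   irrelevant junk. *)

Record VTC := {
  vcat :> Cat;
  tens : CC -> vcat -> vcat -> vcat;
  tensm : forall z (A B A' B' : vcat), Hom A A' -> Hom B B' ->
      Hom (tens z A B) (tens z A' B');
  tensm_id : forall z (A B : vcat), tensm z A B A B (idm A) (idm B) = idm (tens z A B);
  tensm_comp : forall z (A B A' B' A'' B'' : vcat) (f' : Hom A' A'') (g' : Hom B' B'')
      (f : Hom A A') (g : Hom B B'),
      tensm z A B A'' B'' (f' ∘ f) (g' ∘ g) = tensm z A' B' A'' B'' f' g' ∘ tensm z A B A' B' f g;
  vunit : vcat;
  ptrans : forall z1 z2 (g : cpath z1 z2) (A B : vcat), Hom (tens z1 A B) (tens z2 A B);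
  lunit : forall z (A : vcat), Hom (tens z vunit A) A;
  runit : forall z (A : vcat), Hom (tens z A vunit) A;
  vassoc : forall z1 z2 (A B D : vcat),
      Hom (tens z1 A (tens z2 B D)) (tens z2 (tens (Cminus z1 z2) A B) D);
  vbraid : forall z (A B : vcat), Hom (tens z A B) (tens (Copp z) B A);

  ptrans_nat : forall z1 z2 (g : cpath z1 z2) A B A' B' (f : Hom A A') (h : Hom B B'),
      ptrans z1 z2 g A' B' ∘ tensm z1 A B A' B' f h = tensm z2 A B A' B' f h ∘ ptrans z1 z2 g A B;
  ptrans_iso : forall z1 z2 (g : cpath z1 z2) A B, is_iso (ptrans z1 z2 g A B);
  lunit_nat : forall z, z <> RtoC 0 -> forall A A' (f : Hom A A'),
      lunit z A' ∘ tensm z vunit A vunit A' (idm vunit) f = f ∘ lunit z A;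
  lunit_iso : forall z, z <> RtoC 0 -> forall A, is_iso (lunit z A);
  runit_nat : forall z, z <> RtoC 0 -> forall A A' (f : Hom A A'),
      runit z A' ∘ tensm z A vunit A' vunit f (idm vunit) = f ∘ runit z A;
  runit_iso : forall z, z <> RtoC 0 -> forall A, is_iso (runit z A);
  vassoc_nat : forall z1 z2, assoc_region z1 z2 ->
      forall A B D A' B' D' (f : Hom A A') (g : Hom B B') (h : Hom D D'),
      vassoc z1 z2 A' B' D' ∘ tensm z1 _ _ _ _ f (tensm z2 _ _ _ _ g h)
      = tensm z2 _ _ _ _ (tensm (Cminus z1 z2) _ _ _ _ f g) h ∘ vassoc z1 z2 A B D;
  vassoc_iso : forall z1 z2, assoc_region z1 z2 -> forall A B D, is_iso (vassoc z1 z2 A B D);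
  vbraid_nat : forall z, z <> RtoC 0 -> forall A B A' B' (f : Hom A A') (g : Hom B B'),
      vbraid z A' B' ∘ tensm z _ _ _ _ f g = tensm (Copp z) _ _ _ _ g f ∘ vbraid z A B;
  vbraid_iso : forall z, z <> RtoC 0 -> forall A B, is_iso (vbraid z A B);

  ptrans_homotopy : forall z1 z2 (g h : cpath z1 z2), homotopic g h ->
      forall A B, ptrans z1 z2 g A B = ptrans z1 z2 h A B;
  ptrans_const : forall z (g : cpath z z), is_constant_path g ->
      forall A B, ptrans z z g A B = idm (tens z A B);
  ptrans_concat : forall z1 z2 z3 (g1 : cpath z1 z2) (g2 : cpath z2 z3) (g : cpath z1 z3),
      is_concat g1 g2 g ->
      forall A B, ptrans z1 z3 g A B = ptrans z2 z3 g2 A B ∘ ptrans z1 z2 g1 A B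
}.

Arguments tens {v} z _ _.
Arguments tensm {v} z {A B A' B'} _ _.
Arguments vunit {v}.
Arguments ptrans {v z1 z2} g A B.
Arguments lunit {v} z A.
Arguments runit {v} z A.
Arguments vassoc {v} z1 z2 A B D.
Arguments vbraid {v} z A B.

Definition is_vertex_tensor_functor (lax : bool) (V1 V2 : VTC) (F : Functor V1 V2)
  (J : forall z (A B : V1), Hom (tens z (F A) (F B)) (F (tens z A B)))
  (phi : Hom (@vunit V2) (F (@vunit V1))) : Prop :=
  is_iso phi /\
  (forall z, z <> RtoC 0 -> forall (A B A' B' : V1) (f : Hom A A') (g : Hom B B'),
      J z A' B' ∘ tensm z (fmap F f) (fmap F g) = fmap F (tensm z f g) ∘ J z A B) /\
  (lax = false -> forall z, z <> RtoC 0 -> forall A B, is_iso (J z A B)) /\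
  (forall z1 z2 (g : cpath z1 z2) (A B : V1),
      J z2 A B ∘ ptrans g (F A) (F B) = fmap F (ptrans g A B) ∘ J z1 A B) /\
  (forall z, z <> RtoC 0 -> forall M : V1,
      fmap F (lunit z M) ∘ J z vunit M ∘ tensm z phi (idm (F M)) = lunit z (F M)) /\
  (forall z, z <> RtoC 0 -> forall M : V1,
      fmap F (runit z M) ∘ J z M vunit ∘ tensm z (idm (F M)) phi = runit z (F M)) /\
  (forall z1 z2, assoc_region z1 z2 -> forall W1 W2 W3 : V1,
      J z2 (tens (Cminus z1 z2) W1 W2) W3 ∘ tensm z2 (J (Cminus z1 z2) W1 W2) (idm (F W3))
        ∘ vassoc z1 z2 (F W1) (F W2) (F W3)
      = fmap F (vassoc z1 z2 W1 W2 W3) ∘ J z1 W1 (tens z2 W2 W3)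
        ∘ tensm z1 (idm (F W1)) (J z2 W2 W3)) /\
  (forall z, z <> RtoC 0 -> forall M1 M2 : V1,
      J (Copp z) M2 M1 ∘ vbraid z (F M1) (F M2) = fmap F (vbraid z M1 M2) ∘ J z M1 M2).

Record BTData := {
  bcat :> Cat;
  btens : bcat -> bcat -> bcat;
  btensm : forall (A B A' B' : bcat), Hom A A' -> Hom B B' -> Hom (btens A B) (btens A' B');
  bunit : bcat;
  bl : forall A : bcat, Hom (btens bunit A) A;
  br : forall A : bcat, Hom (btens A bunit) A;
  bA : forall A B D : bcat, Hom (btens A (btens B D)) (btens (btens A B) D);
  bR : forall A B : bcat, Hom (btens A B) (btens B A) }.

Arguments btens {b} _ _.
Arguments btensm {b A B A' B'} _ _.
Arguments bunit {b}.
Arguments bl {b} A.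
Arguments br {b} A.
Arguments bA {b} A B D.
Arguments bR {b} A B.

Definition is_braided_tensor_functor (lax : bool) (T1 T2 : BTData) (F : Functor T1 T2)
  (J : forall A B : T1, Hom (btens (F A) (F B)) (F (btens A B)))
  (phi : Hom (@bunit T2) (F (@bunit T1))) : Prop :=
  is_iso phi /\
  (forall (A B A' B' : T1) (f : Hom A A') (g : Hom B B'),
      J A' B' ∘ btensm (fmap F f) (fmap F g) = fmap F (btensm f g) ∘ J A B) /\
  (lax = false -> forall A B, is_iso (J A B)) /\
  (forall M : T1, fmap F (bl M) ∘ J bunit M ∘ btensm phi (idm (F M)) = bl (F M)) /\
  (forall M : T1, fmap F (br M) ∘ J M bunit ∘ btensm (idm (F M)) phi = br (F M)) /\
  (forall W1 W2 W3 : T1,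
      J (btens W1 W2) W3 ∘ btensm (J W1 W2) (idm (F W3)) ∘ bA (F W1) (F W2) (F W3)
      = fmap F (bA W1 W2 W3) ∘ J W1 (btens W2 W3) ∘ btensm (idm (F W1)) (J W2 W3)) /\
  (forall M1 M2 : T1, J M2 M1 ∘ bR (F M1) (F M2) = fmap F (bR M1 M2) ∘ J M1 M2).

(* It is built from real numbers
   r1 > r2 > r1 - r2 > 0 and parallel transports T_{1->r1}, T_{1->r2},
   T_{r1-r2->1}, T_{r2->1}, T_{-1->1} along paths not crossing the positive real
   axis (the result is independent of these choices in a vertex tensor category). *)

Definition real_choice (r1 r2 : R) : Prop := r1 > r2 /\ r2 > r1 - r2 /\ r1 - r2 > 0.

Definition induced_btc (V : VTC) (r1 r2 : R)
  (g1 : cpath (RtoC 1) (RtoC r1)) (g2 : cpath (RtoC 1) (RtoC r2))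
  (g3 : cpath (Cminus (RtoC r1) (RtoC r2)) (RtoC 1)) (g4 : cpath (RtoC r2) (RtoC 1))
  (g5 : cpath (Copp (RtoC 1)) (RtoC 1)) : BTData :=
  {| bcat := V;
     btens := tens (RtoC 1);
     btensm := fun A B A' B' f g => tensm (RtoC 1) f g;
     bunit := vunit;
     bl := lunit (RtoC 1);
     br := runit (RtoC 1);
     bA := fun W1 W2 W3 =>
       ptrans g4 (tens (RtoC 1) W1 W2) W3
       ∘ tensm (RtoC r2) (ptrans g3 W1 W2) (idm W3)
       ∘ vassoc (RtoC r1) (RtoC r2) W1 W2 W3
       ∘ tensm (RtoC r1) (idm W1) (ptrans g2 W2 W3)
       ∘ ptrans g1 W1 (tens (RtoC 1) W2 W3);
     bR := fun M1 M2 => ptrans g5 M2 M1 ∘ vbraid (RtoC 1) M1 M2 |}.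

From Stdlib Require Import Reals Lra.
From Coquelicot Require Import Coquelicot.
Open Scope R_scope.

(* Each structure morphism of the induced braided tensor category is a composite
   of parallel transports, tensor products of parallel transports with
   identities, and one P(z1,z2)-associativity or P(1)-braiding isomorphism.
   For each of these pieces, J (or its two-fold tensor composite) carries the
   piece in C2 to its image under Phi, by the axioms of a vertex tensor functor
   together with the naturality of J and of parallel transport; such
   commutative squares paste along composites.  The unit and naturality
   conditions are those of J_{P(1)} itself. *)

Definition intertwines {K L : Cat} (F : Functor K L) {X Y : L} {A B : K}
  (jX : Hom X (F A)) (jY : Hom Y (F B)) (f : Hom X Y) (g : Hom A B) : Prop :=
  jY ∘ f = fmap F g ∘ jX.

Lemma intertwines_comp {K L : Cat} (F : Functor K L) {X Y Z : L} {A B D : K}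
  (jX : Hom X (F A)) (jY : Hom Y (F B)) (jZ : Hom Z (F D))
  (f' : Hom Y Z) (g' : Hom B D) (f : Hom X Y) (g : Hom A B) :
  intertwines F jY jZ f' g' -> intertwines F jX jY f g ->
  intertwines F jX jZ (f' ∘ f) (g' ∘ g).
Proof.
  unfold intertwines; intros Hfg' Hfg.
  rewrite comp_assoc, Hfg', <- comp_assoc, Hfg, comp_assoc, fmap_comp.
  reflexivity.
Qed.

Lemma tensm_compl (V : VTC) z (A A' A'' B : V) (f' : Hom A' A'') (f : Hom A A') :
  tensm z (f' ∘ f) (idm B) = tensm z f' (idm B) ∘ tensm z f (idm B).
Proof. rewrite <- tensm_comp, comp_idl. reflexivity. Qed.

Lemma tensm_compr (V : VTC) z (A B B' B'' : V) (f' : Hom B' B'') (f : Hom B B') :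
  tensm z (idm A) (f' ∘ f) = tensm z (idm A) f' ∘ tensm z (idm A) f.
Proof. rewrite <- tensm_comp, comp_idl. reflexivity. Qed.

Lemma Cmod_pos_neq0 (z : CC) : Cmod z > 0 -> z <> RtoC 0.
Proof. intros Hz ->. rewrite Cmod_0 in Hz. lra. Qed.

Lemma assoc_region_neq0 z1 z2 :
  assoc_region z1 z2 -> z1 <> RtoC 0 /\ z2 <> RtoC 0.
Proof.
  intros (H12 & H2 & H0).
  split; apply Cmod_pos_neq0; lra.
Qed.

Lemma Cminus_RtoC r1 r2 : Cminus (RtoC r1) (RtoC r2) = RtoC (r1 - r2).
Proof. unfold Cminus, Cplus, Copp, RtoC; simpl. f_equal; ring. Qed.

Lemma real_choice_assoc_region r1 r2 :
  real_choice r1 r2 -> assoc_region (RtoC r1) (RtoC r2).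
Proof.
  intros (H12 & H2 & H0).
  unfold assoc_region. rewrite Cminus_RtoC, !Cmod_R, !Rabs_right by lra. lra.
Qed.

Lemma RtoC1_neq0 : RtoC 1 <> RtoC 0.
Proof. apply Cmod_pos_neq0. rewrite Cmod_R, Rabs_R1. lra. Qed.

Section TensorCompatibility.

Context {V1 V2 : VTC} (F : Functor V1 V2)
  (J : forall z (A B : V1), Hom (tens z (F A) (F B)) (F (tens z A B))).

Hypothesis J_nat : forall z, z <> RtoC 0 ->
  forall (A B A' B' : V1) (f : Hom A A') (g : Hom B B'),
  intertwines F (J z A B) (J z A' B') (tensm z (fmap F f) (fmap F g)) (tensm z f g).

Hypothesis J_ptrans : forall z1 z2 (g : cpath z1 z2) (A B : V1),
  intertwines F (J z1 A B) (J z2 A B) (ptrans g (F A) (F B)) (ptrans g A B).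

Definition Jtens_l z w (W1 W2 W3 : V1) :
  Hom (tens w (tens z (F W1) (F W2)) (F W3)) (F (tens w (tens z W1 W2) W3)) :=
  J w (tens z W1 W2) W3 ∘ tensm w (J z W1 W2) (idm (F W3)).

Definition Jtens_r z w (W1 W2 W3 : V1) :
  Hom (tens z (F W1) (tens w (F W2) (F W3))) (F (tens z W1 (tens w W2 W3))) :=
  J z W1 (tens w W2 W3) ∘ tensm z (idm (F W1)) (J w W2 W3).

Lemma J_tensm_l z (A A' B : V1) (f : Hom A A') : z <> RtoC 0 ->
  intertwines F (J z A B) (J z A' B) (tensm z (fmap F f) (idm (F B))) (tensm z f (idm B)).
Proof. intros Hz. rewrite <- fmap_id. exact (J_nat z Hz _ _ _ _ f (idm B)). Qed.

Lemma J_tensm_r z (A B B' : V1) (f : Hom B B') : z <> RtoC 0 ->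
  intertwines F (J z A B) (J z A B') (tensm z (idm (F A)) (fmap F f)) (tensm z (idm A) f).
Proof. intros Hz. rewrite <- fmap_id. exact (J_nat z Hz _ _ _ _ (idm A) f). Qed.

Lemma Jtens_l_ptrans_outer z w w' (g : cpath w w') W1 W2 W3 :
  intertwines F (Jtens_l z w W1 W2 W3) (Jtens_l z w' W1 W2 W3)
    (ptrans g (tens z (F W1) (F W2)) (F W3)) (ptrans g (tens z W1 W2) W3).
Proof.
  unfold intertwines, Jtens_l.
  rewrite <- comp_assoc, <- ptrans_nat, !comp_assoc.
  f_equal. apply J_ptrans.
Qed.

Lemma Jtens_r_ptrans_outer z z' w (g : cpath z z') W1 W2 W3 :
  intertwines F (Jtens_r z w W1 W2 W3) (Jtens_r z' w W1 W2 W3)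
    (ptrans g (F W1) (tens w (F W2) (F W3))) (ptrans g W1 (tens w W2 W3)).
Proof.
  unfold intertwines, Jtens_r.
  rewrite <- comp_assoc, <- ptrans_nat, !comp_assoc.
  f_equal. apply J_ptrans.
Qed.

Lemma Jtens_l_ptrans_inner z z' w (g : cpath z z') W1 W2 W3 : w <> RtoC 0 ->
  intertwines F (Jtens_l z w W1 W2 W3) (Jtens_l z' w W1 W2 W3)
    (tensm w (ptrans g (F W1) (F W2)) (idm (F W3))) (tensm w (ptrans g W1 W2) (idm W3)).
Proof.
  intros Hw. unfold intertwines, Jtens_l.
  rewrite <- comp_assoc, <- tensm_compl, J_ptrans, tensm_compl, !comp_assoc.
  f_equal. exact (J_tensm_l w _ _ W3 (ptrans g W1 W2) Hw).
Qed.

Lemma Jtens_r_ptrans_inner z w w' (g : cpath w w') W1 W2 W3 : z <> RtoC 0 ->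
  intertwines F (Jtens_r z w W1 W2 W3) (Jtens_r z w' W1 W2 W3)
    (tensm z (idm (F W1)) (ptrans g (F W2) (F W3))) (tensm z (idm W1) (ptrans g W2 W3)).
Proof.
  intros Hz. unfold intertwines, Jtens_r.
  rewrite <- comp_assoc, <- tensm_compr, J_ptrans, tensm_compr, !comp_assoc.
  f_equal. exact (J_tensm_r z W1 _ _ (ptrans g W2 W3) Hz).
Qed.

Hypothesis J_vassoc : forall z1 z2, assoc_region z1 z2 -> forall W1 W2 W3 : V1,
  J z2 (tens (Cminus z1 z2) W1 W2) W3 ∘ tensm z2 (J (Cminus z1 z2) W1 W2) (idm (F W3))
    ∘ vassoc z1 z2 (F W1) (F W2) (F W3)
  = fmap F (vassoc z1 z2 W1 W2 W3) ∘ J z1 W1 (tens z2 W2 W3)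
    ∘ tensm z1 (idm (F W1)) (J z2 W2 W3).

Lemma Jtens_vassoc z1 z2 W1 W2 W3 : assoc_region z1 z2 ->
  intertwines F (Jtens_r z1 z2 W1 W2 W3) (Jtens_l (Cminus z1 z2) z2 W1 W2 W3)
    (vassoc z1 z2 (F W1) (F W2) (F W3)) (vassoc z1 z2 W1 W2 W3).
Proof.
  intros Hreg. unfold intertwines, Jtens_l, Jtens_r.
  rewrite J_vassoc by exact Hreg. symmetry. apply comp_assoc.
Qed.

Lemma Jtens_transported_assoc z1 z2 (g1 : cpath (RtoC 1) z1) (g2 : cpath (RtoC 1) z2)
  (g3 : cpath (Cminus z1 z2) (RtoC 1)) (g4 : cpath z2 (RtoC 1)) W1 W2 W3 :
  assoc_region z1 z2 ->
  intertwines F (Jtens_r (RtoC 1) (RtoC 1) W1 W2 W3) (Jtens_l (RtoC 1) (RtoC 1) W1 W2 W3)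
    (ptrans g4 (tens (RtoC 1) (F W1) (F W2)) (F W3)
     ∘ tensm z2 (ptrans g3 (F W1) (F W2)) (idm (F W3))
     ∘ vassoc z1 z2 (F W1) (F W2) (F W3)
     ∘ tensm z1 (idm (F W1)) (ptrans g2 (F W2) (F W3))
     ∘ ptrans g1 (F W1) (tens (RtoC 1) (F W2) (F W3)))
    (ptrans g4 (tens (RtoC 1) W1 W2) W3
     ∘ tensm z2 (ptrans g3 W1 W2) (idm W3)
     ∘ vassoc z1 z2 W1 W2 W3
     ∘ tensm z1 (idm W1) (ptrans g2 W2 W3)
     ∘ ptrans g1 W1 (tens (RtoC 1) W2 W3)).
Proof.
  intros Hreg. destruct (assoc_region_neq0 z1 z2 Hreg) as [Hz1 Hz2].
  eapply intertwines_comp; [|apply Jtens_r_ptrans_outer].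
  eapply intertwines_comp; [|apply Jtens_r_ptrans_inner; exact Hz1].
  eapply intertwines_comp; [|apply Jtens_vassoc; exact Hreg].
  eapply intertwines_comp; [apply Jtens_l_ptrans_outer|].
  apply Jtens_l_ptrans_inner; exact Hz2.
Qed.

End TensorCompatibility.

Theorem mainTheorem13 (lax : bool) (V1 V2 : VTC) (F : Functor V1 V2)
  (J : forall z (A B : V1), Hom (tens z (F A) (F B)) (F (tens z A B)))
  (phi : Hom (@vunit V2) (F (@vunit V1))) :
  is_vertex_tensor_functor lax V1 V2 F J phi ->
  forall (r1 r2 : R) (g1 : cpath (RtoC 1) (RtoC r1)) (g2 : cpath (RtoC 1) (RtoC r2))
    (g3 : cpath (Cminus (RtoC r1) (RtoC r2)) (RtoC 1)) (g4 : cpath (RtoC r2) (RtoC 1))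
    (g5 : cpath (Copp (RtoC 1)) (RtoC 1)),
    real_choice r1 r2 ->
    no_cross g1 -> no_cross g2 -> no_cross g3 -> no_cross g4 -> no_cross g5 ->
    is_braided_tensor_functor lax
      (induced_btc V1 r1 r2 g1 g2 g3 g4 g5) (induced_btc V2 r1 r2 g1 g2 g3 g4 g5)
      F (J (RtoC 1)) phi.
Proof.
  intros (Hphi & Hnat & Hiso & Hpt & Hl & Hr & Has & Hbr)
    r1 r2 g1 g2 g3 g4 g5 Hrc _ _ _ _ _.
  pose proof RtoC1_neq0 as H1.
  unfold is_braided_tensor_functor; cbn [induced_btc bcat btens btensm bunit bl br bA bR].
  repeat split.
  - exact Hphi.
  - intros A B A' B' f g. exact (Hnat _ H1 _ _ _ _ f g).
  - intros Hlax. exact (Hiso Hlax _ H1).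
  - intros M. exact (Hl _ H1 M).
  - intros M. exact (Hr _ H1 M).
  - intros W1 W2 W3. rewrite <- (comp_assoc _ _ _ _ _ (fmap F _)).
    exact (Jtens_transported_assoc F J Hnat Hpt Has _ _ g1 g2 g3 g4 W1 W2 W3
             (real_choice_assoc_region r1 r2 Hrc)).
  - intros M1 M2.
    exact (intertwines_comp F _ _ _ _ _ _ _ (Hpt _ _ g5 M2 M1) (Hbr _ H1 M1 M2)).
Qed.
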